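(* Let $n\in\mathbb{N}$ and let $\|\cdot\|_u$ be a unitarily-invariant norm on $\mathbb{M}_n(\mathbb{C})$. Let $N\in\mathbb{M}_n(\mathbb{C})$ be normal and $A\in\mathbb{M}_n(\mathbb{C})$, and suppose $\|p(A)\|_u=\|p(N)\|_u$ for every polynomial $p$ with complex coefficients. Then $A$ is normal. If moreover $\|\cdot\|_u$ separates projections by rank, then $A$ and $N$ are unitarily similar.
   Context: A norm $\|\cdot\|_u$ on $\mathbb{M}_n(\mathbb{C})$ is unitarily-invariant if $\|UXV\|_u=\|X\|_u$ for all $X$ and all unitaries $U,V$. It separates projections by rank if whenever $P,Q$ are orthogonal projections ($P=P^2=P^*$) with $\operatorname{rank}P\ne\operatorname{rank}Q$, then $\|P\|_u\neq\|Q\|_u$. *)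

(* Complex numbers are modelled by an arbitrary
   numClosedFieldType C. *)
From HB Require Import structures.
From mathcomp Require Import all_boot all_order all_algebra.
Set Implicit Arguments. Unset Strict Implicit. Unset Printing Implicit Defensive.
Import Order.TTheory GRing.Theory Num.Theory.
Local Open Scope ring_scope.

Definition adjmx (C : numClosedFieldType) (m n : nat) (A : 'M[C]_(m, n)) : 'M[C]_(n, m) :=
  (map_mx Num.conj A)^T.

(* k-th power of a square matrix (valid for every n, including n = 0) *)
Definition mxpow (C : numClosedFieldType) (n : nat) (A : 'M[C]_n) (k : nat) : 'M[C]_n :=
  iter k (fun B => A *m B) 1%:M.

Definition mxeval (C : numClosedFieldType) (n : nat) (p : {poly C}) (A : 'M[C]_n) : 'M[C]_n :=
  \sum_(i < size p) p`_i *: mxpow A i.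

Definition is_unitary (C : numClosedFieldType) (n : nat) (U : 'M[C]_n) : Prop :=
  U *m adjmx U = 1%:M.

Definition is_normal (C : numClosedFieldType) (n : nat) (A : 'M[C]_n) : Prop :=
  A *m adjmx A = adjmx A *m A.

Definition is_orth_proj (C : numClosedFieldType) (n : nat) (P : 'M[C]_n) : Prop :=
  P *m P = P /\ adjmx P = P.

(* a norm on M_n(C), with (real, nonnegative) values in C *)
Definition is_mxnorm (C : numClosedFieldType) (n : nat) (nu : 'M[C]_n -> C) : Prop :=
  (forall X, 0 <= nu X) /\
  (forall X, nu X = 0 -> X = 0) /\
  (forall (a : C) X, nu (a *: X) = `|a| * nu X) /\
  (forall X Y, nu (X + Y) <= nu X + nu Y).

Definition unitarily_invariant (C : numClosedFieldType) (n : nat) (nu : 'M[C]_n -> C) : Prop :=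
  forall X U V, is_unitary U -> is_unitary V -> nu (U *m X *m V) = nu X.

Definition separates_proj_by_rank (C : numClosedFieldType) (n : nat) (nu : 'M[C]_n -> C) : Prop :=
  forall P Q, is_orth_proj P -> is_orth_proj Q -> \rank P <> \rank Q -> nu P <> nu Q.

Definition unitarily_similar (C : numClosedFieldType) (n : nat) (A B : 'M[C]_n) : Prop :=
  exists U, is_unitary U /\ A = U *m B *m adjmx U.

From HB Require Import structures.
From mathcomp Require Import all_boot all_order all_algebra.
From mathcomp Require Import fingroup perm ring.
Set Implicit Arguments. Unset Strict Implicit. Unset Printing Implicit Defensive.
Import Order.TTheory GRing.Theory Num.Theory.
Local Open Scope ring_scope.

(* Diagonalise N = P^* diag(d) P and let L_l be the Lagrange polynomials on the
   spectrum of N.  As nu (p(A)) = nu (p(N)), p(A) = q(A) whenever p and q agree on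
   that spectrum; so E_l := L_l(A) is idempotent, A = \sum_l l E_l, and
   Y := 2 E_l - 1 is an involution with nu(Y) = nu(2 L_l(N) - 1) = nu(1).
   Pinching and averaging over cyclic permutations give |tr X| nu(1) <= n nu(X);
   writing Y = W S V with W, V unitary and S > 0 diagonal, Y = Y^-1 turns this into
   tr S <= n and tr S^-1 <= n, hence S = 1: Y is a unitary involution, hence
   self-adjoint, and so is E_l.  Then A^* = \sum_l l^* E_l is a polynomial in A, so A
   is normal.  If nu separates projections by rank, the orthogonal projections E_l
   and L_l(N) have equal ranks, i.e. A and N have the same eigenvalue
   multiplicities. *)

Lemma rank_diag (F : fieldType) n (v : 'rV[F]_n) :
  \rank (diag_mx v) = #|[pred i | v 0 i != 0]|.
Proof.
rewrite -sum1_card big_mkcond /=.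
elim: n v => [|n IH] v; first by rewrite big_ord0 thinmx0 mxrank0.
change (\rank (@diag_mx F (1 + n) v) =
  \sum_(i < 1 + n) (if i \in [pred i | v ord0 i != 0%R] then 1 else 0))%N.
rewrite -[v](@hsubmxK F 1 1 n) diag_mx_row rank_diag_block_mx IH.
rewrite big_split_ord big_ord1 /=; congr (_ + _)%N; last first.
  by apply: eq_bigr => i _; rewrite !inE (@row_mxEr F 1 1 n).
rewrite !inE (@row_mxEl F 1 1 n).
have -> : diag_mx (@lsubmx F 1 1 n v) = @lsubmx F 1 1 n v.
  by apply/matrixP => i j; rewrite !ord1 !mxE eqxx mulr1n.
rewrite rank_rV; congr (nat_of_bool (~~ _)).
apply/eqP/eqP => [->|v0]; first by rewrite mxE.
by apply/matrixP => i j; rewrite !ord1 v0 mxE.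
Qed.

Section Adjoint.
Context {C : numClosedFieldType}.

Lemma adjmxE m n (A : 'M[C]_(m, n)) : adjmx A = (A ^t* )%sesqui.
Proof. by rewrite /adjmx map_trmx. Qed.

Lemma adjmxK m n (A : 'M[C]_(m, n)) : adjmx (adjmx A) = A.
Proof. by apply/matrixP => i j; rewrite !mxE conjCK. Qed.

Lemma adjmxM m n p (A : 'M[C]_(m, n)) (B : 'M[C]_(n, p)) :
  adjmx (A *m B) = adjmx B *m adjmx A.
Proof. by rewrite /adjmx map_mxM trmx_mul. Qed.

Lemma adjmxD m n (A B : 'M[C]_(m, n)) : adjmx (A + B) = adjmx A + adjmx B.
Proof. by apply/matrixP => i j; rewrite !mxE rmorphD. Qed.

Lemma adjmxZ m n a (A : 'M[C]_(m, n)) : adjmx (a *: A) = a^* *: adjmx A.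
Proof. by apply/matrixP => i j; rewrite !mxE rmorphM. Qed.

Lemma adjmx_sum m n I (r : seq I) (F : I -> 'M[C]_(m, n)) :
  adjmx (\sum_(i <- r) F i) = \sum_(i <- r) adjmx (F i).
Proof.
apply: (big_morph _ (@adjmxD m n)).
by apply/matrixP => i j; rewrite !mxE rmorph0.
Qed.

Lemma adjmx1 n : adjmx (1%:M : 'M[C]_n) = 1%:M.
Proof. by rewrite /adjmx map_mx1 trmx1. Qed.

Lemma adjmx_diag n (d : 'rV[C]_n) : adjmx (diag_mx d) = diag_mx (map_mx Num.conj d).
Proof. by rewrite /adjmx map_diag_mx tr_diag_mx. Qed.

Lemma adjmx_perm n (s : 'S_n) : adjmx (perm_mx s : 'M[C]_n) = perm_mx s^-1.
Proof. by rewrite /adjmx map_perm_mx tr_perm_mx. Qed.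

Lemma unitmx_adjmx n (A : 'M[C]_n) : (adjmx A \in unitmx) = (A \in unitmx).
Proof. by rewrite !unitmxE /adjmx det_tr det_map_mx !unitfE conjC_eq0. Qed.

Lemma is_unitaryE n (U : 'M[C]_n) : is_unitary U <-> U \is unitarymx.
Proof. by rewrite /is_unitary adjmxE; split => /unitarymxP. Qed.

Lemma unitary_mulCmx n (U : 'M[C]_n) : is_unitary U -> adjmx U *m U = 1%:M.
Proof. exact: mulmx1C. Qed.

Lemma mulmx_unitaryK p n (U : 'M[C]_n) (X : 'M[C]_(p, n)) :
  is_unitary U -> X *m U *m adjmx U = X.
Proof. by move=> UU; rewrite -mulmxA UU mulmx1. Qed.

Lemma unitary_unit n (U : 'M[C]_n) : is_unitary U -> U \in unitmx.
Proof. by case/mulmx1_unit. Qed.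

Lemma unitary_adj n (U : 'M[C]_n) : is_unitary U -> is_unitary (adjmx U).
Proof. by rewrite /is_unitary adjmxK; apply: mulmx1C. Qed.

Lemma unitaryM n (U V : 'M[C]_n) : is_unitary U -> is_unitary V -> is_unitary (U *m V).
Proof. by move=> /is_unitaryE UU /is_unitaryE VU; apply/is_unitaryE/mul_unitarymx. Qed.

Lemma unitary1 n : is_unitary (1%:M : 'M[C]_n).
Proof. by rewrite /is_unitary adjmx1 mulmx1. Qed.

Lemma unitary_perm n (s : 'S_n) : is_unitary (perm_mx s : 'M[C]_n).
Proof. by rewrite /is_unitary adjmx_perm -perm_mxM mulgV perm_mx1. Qed.

Lemma unitary_diag n (v : 'rV[C]_n) : (forall i, `|v 0 i| = 1) -> is_unitary (diag_mx v).
Proof.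
move=> v1; rewrite /is_unitary adjmx_diag mulmx_diag; apply/matrixP => i j.
by rewrite !mxE -normCK v1 expr1n.
Qed.

Lemma perm_conj_diag n (s : 'S_n) (d : 'rV[C]_n) :
  perm_mx s *m diag_mx d *m adjmx (perm_mx s) = diag_mx (\row_i d 0 (s i)).
Proof.
rewrite adjmx_perm -row_permE -col_permE; apply/matrixP => i j.
by rewrite !mxE (inj_eq perm_inj).
Qed.

Lemma mxrank_unitary_conj n (U X : 'M[C]_n) :
  is_unitary U -> \rank (adjmx U *m X *m U) = \rank X.
Proof.
move=> UU; rewrite mxrankMfree ?row_free_unit ?unitary_unit //.
by rewrite eqmxMfull // row_full_unit unitmx_adjmx unitary_unit.
Qed.

Lemma normal_unitary_diag n (A : 'M[C]_n) : is_normal A ->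
  exists P d, is_unitary P /\ A = adjmx P *m diag_mx d *m P.
Proof.
move=> nA; have /orthomx_spectralP eA : A \is normalmx.
  by apply/normalmxP; rewrite -!adjmxE.
have PU := spectral_unitarymx A.
exists (spectralmx A), (spectral_diag A); split; first exact/is_unitaryE.
by rewrite adjmxE -invmx_unitary.
Qed.

Lemma normal_adjmx_horner n (A : 'M[C]_n.+1) p : adjmx A = horner_mx A p -> is_normal A.
Proof. by move=> Ap; have := comm_horner_mx2 A 'X p; rewrite horner_mx_X /is_normal Ap. Qed.

Lemma horner_mx_unitary_diag n (U : 'M[C]_n.+1) (d : 'rV[C]_n.+1) p :
  is_unitary U ->
  horner_mx (adjmx U *m diag_mx d *m U) p = adjmx U *m diag_mx (map_mx (horner p) d) *m U.
Proof.
move=> /is_unitaryE UU.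
by rewrite adjmxE -invmx_unitary // horner_mx_uconjC ?unitarymx_unit // horner_mx_diag.
Qed.

Lemma horner_mx_unitary_diag_eq0 n (U : 'M[C]_n.+1) (d : 'rV[C]_n.+1) p :
  is_unitary U -> horner_mx (adjmx U *m diag_mx d *m U) p = 0 -> forall i, root p (d 0 i).
Proof.
move=> UU; rewrite horner_mx_unitary_diag // => p0 i.
have : diag_mx (map_mx (horner p) d) = U *m 0 *m adjmx U.
  by rewrite -p0 !mulmxA UU mul1mx -mulmxA UU mulmx1.
by rewrite mulmx0 mul0mx => /matrixP /(_ i i); rewrite !mxE eqxx mulr1n => /rootP.
Qed.

End Adjoint.

Lemma unitarily_similar_diag (C : numClosedFieldType) n (P Q : 'M[C]_n) (d e : 'rV[C]_n) :
  is_unitary P -> is_unitary Q ->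
  (forall l, #|[pred i | e 0 i == l]| = #|[pred i | d 0 i == l]|) ->
  unitarily_similar (adjmx Q *m diag_mx e *m Q) (adjmx P *m diag_mx d *m P).
Proof.
move=> PU QU mult.
have /tuple_permP [s es] : perm_eq [tuple e 0 i | i < n] [tuple d 0 i | i < n].
  apply/allP => l _; apply/eqP; have := mult l.
  by rewrite !cardE /= !count_map -!size_filter.
have e_perm i : e 0 i = d 0 (s i).
  by have := congr1 (fun t : seq C => nth 0 t i) es; rewrite !nth_mktuple tnth_mktuple.
exists (adjmx Q *m perm_mx s *m P); split.
  by apply: unitaryM => //; apply: unitaryM; [apply: unitary_adj | apply: unitary_perm].
have -> : diag_mx e = perm_mx s *m diag_mx d *m adjmx (perm_mx s).
  by rewrite perm_conj_diag; congr diag_mx; apply/matrixP => i j; rewrite !ord1 mxE e_perm.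
by rewrite !adjmxM adjmxK !mulmxA !mulmx_unitaryK.
Qed.

Section SingularValues.
Context {C : numClosedFieldType} {n : nat}.

Lemma gram_diag_gt0 (B : 'M[C]_n) (d : 'rV[C]_n) :
  B \in unitmx -> adjmx B *m B = diag_mx d -> forall i, 0 < d 0 i.
Proof.
move=> Bu BBd i; rewrite lt_def; apply/andP; split.
  have : diag_mx d \in unitmx by rewrite -BBd unitmx_mul unitmx_adjmx Bu.
  by rewrite unitmxE det_diag unitfE => /prodf_neq0; apply.
have /matrixP /(_ i i) := BBd; rewrite !mxE eqxx mulr1n => <-.
by apply: sumr_ge0 => k _; rewrite !mxE mulrC mul_conjC_ge0.
Qed.

Lemma unitmx_svd (Y : 'M[C]_n) : Y \in unitmx ->
  exists W P (s : 'rV[C]_n),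
    [/\ is_unitary W, is_unitary P, forall i, 0 < s 0 i & Y = W *m diag_mx s *m P].
Proof.
move=> Yu.
have [P [d [PU eYY]]] :
    exists P d, is_unitary P /\ adjmx Y *m Y = adjmx P *m diag_mx d *m P.
  by apply: normal_unitary_diag; rewrite /is_normal adjmxM adjmxK.
pose B := Y *m adjmx P.
have BBd : adjmx B *m B = diag_mx d.
  rewrite /B adjmxM adjmxK mulmxA -(mulmxA P) eYY !mulmxA PU mul1mx.
  by rewrite -mulmxA PU mulmx1.
have d_gt0 : forall i, 0 < d 0 i.
  by apply: gram_diag_gt0 BBd; rewrite unitmx_mul Yu unitmx_adjmx unitary_unit.
pose sg i := sqrtC (d 0 i).
have sg_gt0 i : 0 < sg i by rewrite sqrtC_gt0.
have sg_neq0 i : sg i != 0 by rewrite gt_eqF.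
pose s := \row_i sg i; pose sV := \row_i (sg i)^-1.
have ssV : diag_mx sV *m diag_mx s = 1%:M.
  by apply/matrixP => i j; rewrite mulmx_diag !mxE mulVf.
exists (B *m diag_mx sV), P, s; split => //.
- apply: mulmx1C; rewrite adjmxM adjmx_diag mulmxA -(mulmxA _ _ B) BBd.
  rewrite !mulmx_diag.
  apply/matrixP => i j; rewrite !mxE geC0_conj ?invr_ge0 ?ltW //.
  by rewrite -[d 0 i]sqrtCK -/(sg i) expr2 mulKf // mulfV.
- by move=> i; rewrite mxE.
- by rewrite -(mulmxA B) ssV mulmx1 /B -mulmxA (unitary_mulCmx PU) mulmx1.
Qed.

End SingularValues.

Lemma eq1_of_sum_le_sum_inv_le (R : numFieldType) n (x : 'I_n -> R) :
  (forall i, 0 < x i) -> \sum_i x i <= n%:R -> \sum_i (x i)^-1 <= n%:R ->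
  forall i, x i = 1.
Proof.
move=> x_gt0 sx sxV.
have x_neq0 i : x i != 0 by rewrite gt_eqF.
pose f i := (x i - 1) ^+ 2 / x i.
have f_ge0 i : 0 <= f i.
  by rewrite divr_ge0 ?(ltW (x_gt0 i)) // -realEsqr rpredB ?gtr0_real ?rpred1.
have fE i : f i = x i + (x i)^-1 - 2%:R by rewrite /f; field.
have sf0 : \sum_i f i = 0.
  apply/le_anti; rewrite sumr_ge0 ?andbT //.
  rewrite (eq_bigr _ (fun i _ => fE i)) !big_split /= sumrN sumr_const card_ord.
  by rewrite subr_le0 mulrnAC mulr2n lerD.
move=> i; have : f i == 0 by rewrite (psumr_eq0P (fun j _ => f_ge0 j) sf0).
by rewrite mulf_eq0 invr_eq0 (negPf (x_neq0 i)) orbF sqrf_eq0 subr_eq0 => /eqP.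
Qed.

Section UnitarilyInvariantNorm.
Variables (C : numClosedFieldType) (m : nat).
Local Notation n := m.+1.
Variable nu : 'M[C]_n -> C.
Hypotheses (nu_norm : is_mxnorm nu) (nu_ui : unitarily_invariant nu).

Lemma nu_ge0 X : 0 <= nu X.
Proof. by case: nu_norm => ge0 _; apply: ge0. Qed.

Lemma nu_eq0 X : nu X = 0 -> X = 0.
Proof. by case: nu_norm => _ [eq0 _]; apply: eq0. Qed.

Lemma nuZ a X : nu (a *: X) = `|a| * nu X.
Proof. by case: nu_norm => _ [_ [Z _]]; apply: Z. Qed.

Lemma nuD X Y : nu (X + Y) <= nu X + nu Y.
Proof. by case: nu_norm => _ [_ [_ D]]; apply: D. Qed.

Lemma nu0 : nu 0 = 0.
Proof. by rewrite -(scale0r 0) nuZ normr0 mul0r. Qed.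

Lemma nu_sum I (r : seq I) (F : I -> 'M[C]_n) :
  nu (\sum_(i <- r) F i) <= \sum_(i <- r) nu (F i).
Proof.
elim: r => [|x r IH]; first by rewrite !big_nil nu0.
by rewrite !big_cons (le_trans (nuD _ _)) ?lerD.
Qed.

Lemma nu1_gt0 : 0 < nu 1%:M.
Proof.
rewrite lt_def nu_ge0 andbT; apply/eqP => /nu_eq0 /matrixP /(_ 0 0).
by rewrite !mxE; apply/eqP; rewrite oner_eq0.
Qed.

Lemma nu_mulUl U X : is_unitary U -> nu (U *m X) = nu X.
Proof. by move=> UU; rewrite -[U *m X]mulmx1 nu_ui //; apply: unitary1. Qed.

Lemma nu_unitary U : is_unitary U -> nu U = nu 1%:M.
Proof. by move=> UU; rewrite -[U]mulmx1 nu_mulUl. Qed.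

Lemma nu_unitary_conj U X : is_unitary U -> nu (U *m X *m adjmx U) = nu X.
Proof. by move=> UU; rewrite nu_ui //; apply: unitary_adj. Qed.

Lemma nu_unitary_adjconj U X : is_unitary U -> nu (adjmx U *m X *m U) = nu X.
Proof. by move=> UU; rewrite -{2}[U]adjmxK nu_unitary_conj //; apply: unitary_adj. Qed.

Definition sign_flip (k : nat) : 'M[C]_n :=
  diag_mx (\row_(i < n) if (i : nat) == k then -1 else 1).

Fixpoint pinch (k : nat) (X : 'M[C]_n) : 'M[C]_n :=
  if k is k'.+1 then
    let Y := pinch k' X in 2^-1 *: (Y + sign_flip k' *m Y *m sign_flip k')
  else X.

Lemma pinchE k X i j :
  pinch k X i j = if (i == j) || ((k <= i) && (k <= j))%N then X i j else 0.
Proof.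
elim: k => [|k IH] /=; first by rewrite orbT.
rewrite mul_diag_mx mul_mx_diag !mxE IH.
have half (y : C) : 2^-1 * (y + y) = y by field.
case: (eqVneq i j) => [<-|ne] /=.
  by case: ifP; rewrite ?mulN1r ?mulrN1 ?opprK ?mul1r ?mulr1 half.
case: (ltngtP k i) => hi; case: (ltngtP k j) => hj /=;
  rewrite ?mul1r ?mulr1 ?mulN1r ?mulrN1 ?opprK ?addr0 ?subrr ?mulr0 ?oppr0 ?half //.
by move: ne; rewrite -val_eqE /= -hi -hj eqxx.
Qed.

Lemma nu_pinch k X : nu (pinch k X) <= nu X.
Proof.
have flipU k' : is_unitary (sign_flip k').
  by apply: unitary_diag => i; rewrite mxE; case: ifP; rewrite ?normrN normr1.
elim: k => [|k IH] //=; rewrite nuZ ger0_norm ?invr_ge0 ?ler0n //.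
rewrite (le_trans (ler_wpM2l _ (nuD _ _))) ?invr_ge0 ?ler0n // nu_ui //.
by rewrite -mulr2n -[nu _ *+ 2]mulr_natl mulKf ?pnatr_eq0.
Qed.

Lemma nu_diag_le (X : 'M[C]_n) : nu (diag_mx (\row_i X i i)) <= nu X.
Proof.
suff -> : diag_mx (\row_i X i i) = pinch n X by apply: nu_pinch.
apply/matrixP => i j; rewrite pinchE !mxE leqNgt ltn_ord /= orbF.
by case: eqVneq => [->|]; rewrite ?mulr1n ?mulr0n.
Qed.

Definition rotation (k : 'I_n) : 'S_n := perm (addrI k).

Lemma sum_rotation_conj_diag (v : 'rV[C]_n) :
  \sum_k perm_mx (rotation k) *m diag_mx v *m adjmx (perm_mx (rotation k)) =
  (\sum_j v 0 j)%:M.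
Proof.
apply/matrixP => i j; rewrite summxE !mxE.
under eq_bigr do rewrite perm_conj_diag !mxE permE.
by rewrite sumrMnl [in RHS](reindex_inj (addIr i)).
Qed.

Lemma trace_bound (X : 'M[C]_n) : `|\tr X| * nu 1%:M <= n%:R * nu X.
Proof.
have -> : \tr X = \sum_j (\row_i X i i) 0 j by apply: eq_bigr => i _; rewrite mxE.
rewrite -nuZ scalemx1 -sum_rotation_conj_diag (le_trans (nu_sum _ _)) //.
under eq_bigr do rewrite (nu_unitary_conj _ (unitary_perm _)).
by rewrite sumr_const card_ord -[nu _ *+ _]mulr_natl ler_wpM2l ?nu_diag_le.
Qed.

Lemma trace_mulU_le U Y : nu Y <= nu 1%:M -> is_unitary U -> `|\tr (U *m Y)| <= n%:R.
Proof.
move=> nuY UU; rewrite -(ler_pM2r nu1_gt0) (le_trans (trace_bound _)) //.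
by rewrite nu_mulUl // ler_wpM2l.
Qed.

Lemma involution_self_adjoint Y : Y *m Y = 1%:M -> nu Y <= nu 1%:M -> adjmx Y = Y.
Proof.
move=> YY nuY; have [Yu _] := mulmx1_unit YY.
have [W [P [s [WU PU s_gt0 eY]]]] := unitmx_svd Yu.
have s_neq0 i : s 0 i != 0 by rewrite gt_eqF.
pose sV := \row_i (s 0 i)^-1.
have eYV : Y = adjmx P *m diag_mx sV *m adjmx W.
  have ssV : diag_mx s *m diag_mx sV = 1%:M.
    by apply/matrixP => i j; rewrite mulmx_diag !mxE mulfV.
  have YYV : Y *m (adjmx P *m diag_mx sV *m adjmx W) = 1%:M.
    by rewrite eY !mulmxA -(mulmxA _ P) PU mulmx1 -(mulmxA _ (diag_mx s)) ssV mulmx1 WU.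
  by rewrite -[LHS]mulmx1 -YYV mulmxA YY mul1mx.
have s1 : forall i, s 0 i = 1.
  apply: eq1_of_sum_le_sum_inv_le => //.
    have := trace_mulU_le nuY (unitaryM (unitary_adj PU) (unitary_adj WU)).
    rewrite eY !mulmxA -(mulmxA _ (adjmx W)) (unitary_mulCmx WU) mulmx1 mxtrace_mulC.
    rewrite mulmxA PU mul1mx mxtrace_diag ger0_norm //.
    by apply: sumr_ge0 => i _; rewrite ltW.
  have := trace_mulU_le nuY (unitaryM WU PU).
  rewrite eYV !mulmxA -(mulmxA W) PU mulmx1 mxtrace_mulC mulmxA (unitary_mulCmx WU).
  rewrite mul1mx mxtrace_diag ger0_norm.
    by under eq_bigr do rewrite mxE.
  by apply: sumr_ge0 => i _; rewrite mxE invr_ge0 ltW.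
have YU : is_unitary Y.
  suff -> : Y = W *m P by apply: unitaryM.
  by rewrite eY (_ : diag_mx s = 1%:M) ?mulmx1 //; apply/matrixP => i j; rewrite !mxE s1.
by rewrite -[LHS]mul1mx -YY -mulmxA YU mulmx1.
Qed.

End UnitarilyInvariantNorm.

Lemma mxpowE (C : numClosedFieldType) n (A : 'M[C]_n.+1) k : mxpow A k = A ^+ k.
Proof. by elim: k => [|k IH]; rewrite ?expr0 // exprS /mxpow iterS -IH. Qed.

Lemma mxevalE (C : numClosedFieldType) n (p : {poly C}) (A : 'M[C]_n.+1) :
  mxeval p A = horner_mx A p.
Proof.
rewrite /mxeval -[in RHS](coefK p) poly_def rmorph_sum /=; apply: eq_bigr => i _.
by rewrite horner_mxZ rmorphXn /= horner_mx_X mxpowE.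
Qed.

(* The Lagrange basis of qpoly needs nodes given by an injective [nat -> F]. *)
Section Lagrange.
Variables (F : fieldType) (s : seq F).
Hypothesis s_uniq : uniq s.

Definition lagrange_poly (l : F) : {poly F} :=
  \prod_(b <- s | b != l) ((l - b)^-1 *: ('X - b%:P)).

Lemma horner_lagrange_poly l x : x \in s -> (lagrange_poly l).[x] = (x == l)%:R.
Proof.
move=> xs; rewrite horner_prod; case: eqVneq => [->|xl].
  apply: big1 => b bl; rewrite hornerZ hornerXsubC mulVf //.
  by rewrite subr_eq0 eq_sym.
rewrite big_mkcond (bigD1_seq x) //= xl.
by rewrite hornerZ hornerXsubC subrr mulr0 mul0r.
Qed.

Lemma horner_lagrange_interp (g : F -> F) x : x \in s ->
  (\sum_(l <- s) g l *: lagrange_poly l).[x] = g x.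
Proof.
move=> xs; rewrite horner_sum.
under eq_bigr do rewrite hornerZ horner_lagrange_poly //.
rewrite (bigD1_seq x) //= eqxx mulr1 big1 ?addr0 // => l lx.
by rewrite eq_sym (negPf lx) mulr0.
Qed.

End Lagrange.

Section NormDeterminedByPolynomials.
Variables (C : numClosedFieldType) (m : nat).
Local Notation n := m.+1.
Variable nu : 'M[C]_n -> C.
Hypotheses (nu_norm : is_mxnorm nu) (nu_ui : unitarily_invariant nu).
Variables (N P : 'M[C]_n) (d : 'rV[C]_n).
Hypotheses (P_unitary : is_unitary P) (N_diag : N = adjmx P *m diag_mx d *m P).

Let spec := undup [seq d 0 i | i : 'I_n].
Let spec_uniq : uniq spec := undup_uniq _.
Let mem_spec i : d 0 i \in spec.
Proof. by rewrite mem_undup map_f ?mem_enum. Qed.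

Let L := lagrange_poly spec.

Lemma eq_horner_mx_N f g :
  {in spec, forall x, f.[x] = g.[x]} -> horner_mx N f = horner_mx N g.
Proof.
move=> fg; rewrite N_diag !horner_mx_unitary_diag //; congr (_ *m diag_mx _ *m _).
by apply/matrixP => i j; rewrite ord1 !mxE fg ?mem_spec.
Qed.

Section PolynomiallyNormEqual.
Variable A : 'M[C]_n.
Hypothesis nu_horner : forall p, nu (horner_mx A p) = nu (horner_mx N p).

Lemma eq_horner_mx_A f g :
  {in spec, forall x, f.[x] = g.[x]} -> horner_mx A f = horner_mx A g.
Proof.
move=> fg; apply/eqP; rewrite -subr_eq0; apply/eqP/(nu_eq0 nu_norm).
by rewrite -rmorphB nu_horner rmorphB /= (eq_horner_mx_N fg) subrr (nu0 nu_norm).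
Qed.

Lemma diag_mem_spec (Q : 'M[C]_n) (e : 'rV[C]_n) :
  is_unitary Q -> A = adjmx Q *m diag_mx e *m Q ->
  forall i, e 0 i \in spec.
Proof.
move=> QU eA i; rewrite -root_prod_XsubC.
apply: (horner_mx_unitary_diag_eq0 QU); rewrite -eA -(rmorph0 (horner_mx A)).
by apply: eq_horner_mx_A => x xs; rewrite horner0; apply/rootP; rewrite root_prod_XsubC.
Qed.

Lemma lagrange_orth_proj l : is_orth_proj (horner_mx A (L l)).
Proof.
have Lx x : x \in spec -> (L l).[x] = (x == l)%:R by apply: horner_lagrange_poly.
set E := horner_mx A (L l).
pose Y := horner_mx A (L l *+ 2 - 1).
have YY : Y *m Y = 1%:M.
  rewrite -[Y *m Y]/(Y * Y) -[1%:M]/(1 : 'M[C]_n) -rmorphM -(rmorph1 (horner_mx A)).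
  apply: eq_horner_mx_A => x xs; rewrite hornerM hornerD hornerN hornerMn Lx // hornerC.
  by case: (x == l); rewrite /= ?mul0rn ?sub0r ?mulrNN ?mulr2n ?addrK mulr1.
have nuY : nu Y <= nu 1%:M.
  rewrite nu_horner N_diag horner_mx_unitary_diag // (nu_unitary_adjconj nu_ui) //.
  rewrite (nu_unitary nu_ui) //; apply: unitary_diag => i.
  rewrite !mxE hornerD hornerN hornerMn Lx // hornerC.
  by case: (_ == l); rewrite /= ?mul0rn ?sub0r ?normrN ?mulr2n ?addrK normr1.
have EY : E = 2^-1 *: (Y + 1%:M).
  rewrite /Y rmorphB rmorphMn rmorph1 subrK -scaler_nat scalerA mulVf ?scale1r //.
  by rewrite pnatr_eq0.
split.
  rewrite -[E *m E]/(E * E) -rmorphM; apply: eq_horner_mx_A => x xs.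
  by rewrite hornerM Lx //; case: (x == l); rewrite ?mulr1 ?mulr0.
rewrite EY adjmxZ adjmxD (involution_self_adjoint nu_norm nu_ui YY nuY) adjmx1.
by rewrite geC0_conj // invr_ge0 ler0n.
Qed.

Lemma normal_of_nu_horner : is_normal A.
Proof.
apply: (@normal_adjmx_horner _ _ _ (\sum_(l <- spec) l^* *: L l)).
have A_interp : horner_mx A (\sum_(l <- spec) l *: L l) = A.
  rewrite -[RHS]horner_mx_X; apply: eq_horner_mx_A => x xs.
  by rewrite hornerX horner_lagrange_interp.
rewrite -[A in adjmx A]A_interp !rmorph_sum adjmx_sum /=; apply: eq_bigr => l _.
by rewrite !horner_mxZ adjmxZ (lagrange_orth_proj l).2.
Qed.

End PolynomiallyNormEqual.

Lemma rank_horner_lagrange (Q : 'M[C]_n) (e : 'rV[C]_n) l :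
  is_unitary Q -> (forall i, e 0 i \in spec) ->
  \rank (horner_mx (adjmx Q *m diag_mx e *m Q) (L l)) = #|[pred i | e 0 i == l]|.
Proof.
move=> QU e_spec; rewrite horner_mx_unitary_diag // mxrank_unitary_conj // rank_diag.
apply: eq_card => i; rewrite !inE mxE horner_lagrange_poly //.
by case: (_ == l); rewrite ?oner_eq0 ?eqxx.
Qed.

Lemma unitarily_similar_of_nu_horner A : separates_proj_by_rank nu ->
  (forall p, nu (horner_mx A p) = nu (horner_mx N p)) -> unitarily_similar A N.
Proof.
move=> sep nu_horner.
have [Q [e [QU eA]]] := normal_unitary_diag (normal_of_nu_horner nu_horner).
have e_spec := diag_mem_spec nu_horner QU eA.
rewrite eA N_diag; apply: unitarily_similar_diag => // l.
rewrite -(rank_horner_lagrange l QU e_spec) -(rank_horner_lagrange l P_unitary mem_spec).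
rewrite -eA -N_diag; apply/eqP; apply: contraT => /eqP rank_neq.
have projN := lagrange_orth_proj (fun p => erefl (nu (horner_mx N p))) l.
by case: (sep _ _ (lagrange_orth_proj nu_horner l) projN rank_neq).
Qed.

End NormDeterminedByPolynomials.

Theorem theorem2p4 (C : numClosedFieldType) (n : nat) (nu : 'M[C]_n -> C)
  (Hnorm : is_mxnorm nu) (Hui : unitarily_invariant nu)
  (N A : 'M[C]_n) (HN : is_normal N)
  (Hp : forall p : {poly C}, nu (mxeval p A) = nu (mxeval p N)) :
  is_normal A /\ (separates_proj_by_rank nu -> unitarily_similar A N).
Proof.
case: n nu Hnorm Hui N A HN Hp => [|m] nu Hnorm Hui N A HN Hp.
  split; first by apply/matrixP => [[]].
  by exists 1%:M; split; [apply: unitary1 | apply/matrixP => [[]]].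
have nu_horner p : nu (horner_mx A p) = nu (horner_mx N p) by rewrite -!mxevalE.
have [P [d [PU N_diag]]] := normal_unitary_diag HN.
split; first exact: (normal_of_nu_horner Hnorm Hui PU N_diag nu_horner).
by move=> sep; apply: (unitarily_similar_of_nu_horner Hnorm Hui PU N_diag sep nu_horner).
Qed.
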